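(* Let $\mathbf A=(A,\wedge,\vee,\cdot,1,\sim,-,\neg)$ be a complete perfect DqRA. Define on $J^\infty(\mathbf A)$: $I_1=\{i\in J^\infty(\mathbf A)\mid i\leqslant 1\}$, $a\preccurlyeq b$ iff $b\leqslant a$, $c\in a\circ b$ iff $c\leqslant a\cdot b$, $a^\sim={\sim}\kappa(a)$, $a^-=-\kappa(a)$, $a^\neg=\neg\kappa(a)$. Then $a^\neg\in J^\infty(\mathbf A)$ for all $a\in J^\infty(\mathbf A)$, and $\mathbf A_+=(J^\infty(\mathbf A),I_1,\preccurlyeq,\circ,{}^\sim,{}^-,{}^\neg)$ is a DqRA-frame.
   Context: An InFL-algebra is $(A,\wedge,\vee,\cdot,1,\sim,-)$ with a lattice, a monoid, and $a\cdot b\leqslant c\iff a\leqslant -(b\cdot{\sim}c)\iff b\leqslant{\sim}(-c\cdot a)$; $a+b:=-({\sim}b\cdot{\sim}a)$. A quasi relation algebra is $(A,\wedge,\vee,\cdot,1,\sim,-,\neg)$ where the $\neg$-free reduct is an InFL-algebra, $\neg\neg a=a$, $\neg(a\wedge b)=\neg a\vee\neg b$, and $\neg(a\cdot b)=\neg a+\neg b$; DqRA means the lattice is distributive. Complete perfect: complete, and every element is the join of the completely join-irreducibles ($J^\infty(\mathbf A)$) below it and the meet of the completely meet-irreducibles above it. $\kappa(j)=\bigvee\{a\in A\mid j\not\leqslant a\}$. For a set $W$ and $\circ:W\times W\to\mathcal P(W)$, $U\circ V=\bigcup\{a\circ b\mid a\in U,b\in V\}$, $x\circ V=\{x\}\circ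 V$, $U\circ y=U\circ\{y\}$; superscripts compose left to right. A DInFL-frame is a tuple $(W,I,\preccurlyeq,\circ,{}^\sim,{}^-)$ with $I\subseteq W$, $\preccurlyeq$ a partial order, $\circ:W\times W\to\mathcal P(W)$, ${}^\sim,{}^-:W\to W$, such that for all $u,v,x,y,z$: (F1) $x\preccurlyeq y$ iff $y\in I\circ x$ iff $y\in x\circ I$; (F2) $x\preccurlyeq y$, $x\in I$ imply $y\in I$; (F3) $x\preccurlyeq y$, $x\in u\circ v$ imply $y\in u\circ v$; (F4) $(x\circ y)\circ z=x\circ(y\circ z)$; (F5) $z^\sim\in x\circ y$ iff $y^-\in z\circ x$; (F6) $x^{\sim-}\preccurlyeq x$ and $x^{-\sim}\preccurlyeq x$. A DqRA-frame additionally has ${}^\neg:W\to W$ with (F7) $x^{\neg\neg}=x$; (F8) $x\preccurlyeq y$ implies $y^\neg\preccurlyeq x^\neg$; (F9) $z^-\in x\circ y$ iff $z^\neg\in y^{\sim\neg}\circ x^{\sim\neg}$. *)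

From Stdlib Require Import ClassicalEpsilon.

Set Implicit Arguments.

(** Signature of a quasi relation algebra: (A, meet, join, mul, 1, ~, -, neg). *)
Record qra_ops (A : Type) := QraOps {
  meet : A -> A -> A;
  join : A -> A -> A;
  mul  : A -> A -> A;
  one  : A;
  tl   : A -> A;
  mn   : A -> A;
  ng   : A -> A
}.

Section Alg.
Variables (A : Type) (o : qra_ops A).

Definition le (x y : A) : Prop := meet o x y = x.

Definition is_lattice : Prop :=
  (forall x y z, meet o x (meet o y z) = meet o (meet o x y) z) /\
  (forall x y z, join o x (join o y z) = join o (join o x y) z) /\
  (forall x y, meet o x y = meet o y x) /\
  (forall x y, join o x y = join o y x) /\
  (forall x y, meet o x (join o x y) = x) /\
  (forall x y, join o x (meet o x y) = x).

Definition is_distributive : Prop :=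
  forall x y z, meet o x (join o y z) = join o (meet o x y) (meet o x z).

Definition is_monoid : Prop :=
  (forall x y z, mul o x (mul o y z) = mul o (mul o x y) z) /\
  (forall x, mul o (one o) x = x) /\ (forall x, mul o x (one o) = x).

Definition plus (a b : A) : A := mn o (mul o (tl o b) (tl o a)).

Definition is_InFL : Prop :=
  is_lattice /\ is_monoid /\
  forall a b c,
    (le (mul o a b) c <-> le a (mn o (mul o b (tl o c)))) /\
    (le (mul o a b) c <-> le b (tl o (mul o (mn o c) a))).

Definition is_qRA : Prop :=
  is_InFL /\
  (forall a, ng o (ng o a) = a) /\
  (forall a b, ng o (meet o a b) = join o (ng o a) (ng o b)) /\
  (forall a b, ng o (mul o a b) = plus (ng o a) (ng o b)).

Definition is_DqRA : Prop := is_qRA /\ is_distributive.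

Definition is_lub (S : A -> Prop) (s : A) : Prop :=
  (forall x, S x -> le x s) /\ (forall u, (forall x, S x -> le x u) -> le s u).
Definition is_glb (S : A -> Prop) (s : A) : Prop :=
  (forall x, S x -> le s x) /\ (forall u, (forall x, S x -> le u x) -> le u s).

Definition is_complete : Prop :=
  (forall S : A -> Prop, exists s, is_lub S s) /\
  (forall S : A -> Prop, exists s, is_glb S s).

Definition Jinf (j : A) : Prop := forall S, is_lub S j -> S j.
Definition Minf (m : A) : Prop := forall S, is_glb S m -> S m.

Definition is_perfect : Prop :=
  (forall a, is_lub (fun j => Jinf j /\ le j a) a) /\
  (forall a, is_glb (fun m => Minf m /\ le a m) a).

Definition complete_perfect_DqRA : Prop :=
  is_DqRA /\ is_complete /\ is_perfect.

(** kappa(j) = \/ {a | j not<= a} (well defined when the lattice is complete) *)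
Definition kappa (j : A) : A :=
  epsilon (inhabits j) (is_lub (fun a => ~ le j a)).

End Alg.

(** Frames.  Carrier: the elements of a type T satisfying W.
    circ x y z  means  z ∈ x ∘ y. *)
Section Frame.
Variables (T : Type) (W I : T -> Prop) (prec : T -> T -> Prop)
          (circ : T -> T -> T -> Prop) (ftl fmn fng : T -> T).

Definition DInFL_frame : Prop :=
  (forall x, I x -> W x) /\
  (forall x y z, W x -> W y -> circ x y z -> W z) /\
  (forall x, W x -> W (ftl x) /\ W (fmn x)) /\
  (forall x, W x -> prec x x) /\
  (forall x y, W x -> W y -> prec x y -> prec y x -> x = y) /\
  (forall x y z, W x -> W y -> W z -> prec x y -> prec y z -> prec x z) /\
  (* F1 *)
  (forall x y, W x -> W y ->
     (prec x y <-> exists i, I i /\ circ i x y) /\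
     (prec x y <-> exists i, I i /\ circ x i y)) /\
  (* F2 *)
  (forall x y, W x -> W y -> prec x y -> I x -> I y) /\
  (* F3 *)
  (forall u v x y, W u -> W v -> W x -> W y ->
     prec x y -> circ u v x -> circ u v y) /\
  (* F4 *)
  (forall x y z, W x -> W y -> W z -> forall w,
     (exists u, circ x y u /\ circ u z w) <-> (exists u, circ y z u /\ circ x u w)) /\
  (* F5 *)
  (forall x y z, W x -> W y -> W z ->
     (circ x y (ftl z) <-> circ z x (fmn y))) /\
  (* F6 *)
  (forall x, W x -> prec (fmn (ftl x)) x /\ prec (ftl (fmn x)) x).

Definition DqRA_frame : Prop :=
  DInFL_frame /\
  (forall x, W x -> W (fng x)) /\
  (* F7 *)
  (forall x, W x -> fng (fng x) = x) /\
  (* F8 *)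
  (forall x y, W x -> W y -> prec x y -> prec (fng y) (fng x)) /\
  (* F9 *)
  (forall x y z, W x -> W y -> W z ->
     (circ x y (fmn z) <-> circ (fng (ftl y)) (fng (ftl x)) (fng z))).
End Frame.

Section Plus.
Variables (A : Type) (o : qra_ops A).
Definition Jplus_I (i : A) : Prop := Jinf o i /\ le o i (one o).
Definition Jplus_prec (a b : A) : Prop := le o b a.
Definition Jplus_circ (a b c : A) : Prop := Jinf o c /\ le o c (mul o a b).
Definition Jplus_tl (a : A) : A := tl o (kappa o a).
Definition Jplus_mn (a : A) : A := mn o (kappa o a).
Definition Jplus_ng (a : A) : A := ng o (kappa o a).
End Plus.

(* In a complete perfect distributive lattice every completely join-irreducible
   j is completely join-prime, so kappa(j) is the largest element not above j:
   x <= kappa(j) iff j is not below x.  The pairs (~,-), (-,~) and (neg,neg) are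
   mutually inverse order-reversing bijections, and any such pair (f,g) maps
   J^infty(A) to itself by j |-> f(kappa j), with kappa(f(kappa j)) = f j; this
   gives the operations of the frame and F6, F7.  Being residuated,
   multiplication preserves arbitrary joins in each argument, so a join-prime
   below a product lies below a product of join-irreducibles; with perfection
   this yields F1 and F4.  F5 is residuation, and F9 combines the identity
   ~(x.y) = ~y + ~x with the De Morgan law neg(a.b) = neg a + neg b. *)

From Stdlib Require Import Classical ClassicalEpsilon.

Section Algebra.
Variables (A : Type) (o : qra_ops A).

Local Notation "x ≤ y" := (le o x y) (at level 70).
Local Notation "x ⋅ y" := (mul o x y) (at level 40, left associativity).

Definition join_prime (j : A) : Prop :=
  forall S : A -> Prop, (forall u, (forall x, S x -> x ≤ u) -> j ≤ u) ->
  exists s, S s /\ j ≤ s.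

Record dual_iso (f g : A -> A) : Prop := {
  dual_iso_gf : forall x, g (f x) = x;
  dual_iso_fg : forall x, f (g x) = x;
  dual_iso_anti_f : forall x y, x ≤ y -> f y ≤ f x;
  dual_iso_anti_g : forall x y, x ≤ y -> g y ≤ g x }.

Lemma dual_iso_sym {f g} : dual_iso f g -> dual_iso g f.
Proof. intros [gf fg af ag]; now constructor. Qed.

Lemma dual_iso_le_l {f g k s} : dual_iso f g -> (f k ≤ s <-> g s ≤ k).
Proof.
  intros [gf fg af ag]; split; intro H.
  - rewrite <- (gf k); now apply ag.
  - rewrite <- (fg s); now apply af.
Qed.

Lemma dual_iso_le_r {f g k x} : dual_iso f g -> (x ≤ f k <-> k ≤ g x).
Proof.
  intros [gf fg af ag]; split; intro H.
  - rewrite <- (gf k); now apply ag.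
  - rewrite <- (fg x); now apply af.
Qed.

Hypothesis HL : is_lattice o.

Lemma meet_idem x : meet o x x = x.
Proof.
  destruct HL as (_ & _ & _ & _ & Hmj & Hjm).
  rewrite <- (Hjm x x) at 2; apply Hmj.
Qed.

Lemma le_refl x : x ≤ x.
Proof. apply meet_idem. Qed.

Lemma le_trans {x y z} : x ≤ y -> y ≤ z -> x ≤ z.
Proof.
  destruct HL as (Hma & _); unfold le; intros Hxy Hyz.
  now rewrite <- Hxy, <- Hma, Hyz.
Qed.

Lemma le_antisym {x y} : x ≤ y -> y ≤ x -> x = y.
Proof.
  destruct HL as (_ & _ & Hmc & _); unfold le; intros Hxy Hyx.
  now rewrite <- Hxy, Hmc.
Qed.

Lemma le_ext a b : (forall z, z ≤ a <-> z ≤ b) -> a = b.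
Proof. intro H; apply le_antisym; [apply H | apply H]; apply le_refl. Qed.

Lemma meet_le_l x y : meet o x y ≤ x.
Proof.
  destruct HL as (Hma & _ & Hmc & _); unfold le.
  now rewrite Hmc, Hma, meet_idem.
Qed.

Lemma meet_le_r x y : meet o x y ≤ y.
Proof. destruct HL as (Hma & _); unfold le; now rewrite <- Hma, meet_idem. Qed.

Lemma le_meet {x y z} : z ≤ x -> z ≤ y -> z ≤ meet o x y.
Proof. destruct HL as (Hma & _); unfold le; intros Hx Hy; now rewrite Hma, Hx, Hy. Qed.

Lemma le_join_l x y : x ≤ join o x y.
Proof. destruct HL as (_ & _ & _ & _ & Hmj & _); apply Hmj. Qed.

Lemma le_join_r x y : y ≤ join o x y.
Proof. destruct HL as (_ & _ & _ & Hjc & Hmj & _); unfold le; rewrite Hjc; apply Hmj. Qed.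

Lemma join_le {x y z} : x ≤ z -> y ≤ z -> join o x y ≤ z.
Proof.
  destruct HL as (_ & Hja & Hmc & Hjc & Hmj & Hjm); unfold le.
  assert (Hle_join : forall a b, meet o a b = a -> join o a b = b).
  { intros a b H; rewrite <- H, Hjc, Hmc; apply Hjm. }
  intros Hx Hy; apply Hle_join in Hx; apply Hle_join in Hy.
  rewrite <- Hx, <- Hy, Hja; apply Hmj.
Qed.

Lemma join_prime_Jinf {j} : join_prime j -> Jinf o j.
Proof.
  intros Hj S [Hub Hleast]; destruct (Hj S Hleast) as [s [Hs Hjs]].
  now rewrite <- (le_antisym (Hub s Hs) Hjs).
Qed.

Section Perfect.
Hypotheses (Hdist : is_distributive o)
  (Hlub : forall S : A -> Prop, exists s, is_lub o S s)
  (Hjperf : forall a, is_lub o (fun j => Jinf o j /\ j ≤ a) a)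
  (Hmperf : forall a, is_glb o (fun m => Minf o m /\ a ≤ m) a).

Lemma Minf_meet_prime {m x y} : Minf o m -> meet o x y ≤ m -> x ≤ m \/ y ≤ m.
Proof.
  intros Hm Hxy.
  (* Distributivity makes m the meet of x \/ m and y \/ m. *)
  assert (Hglb : is_glb o (fun w => w = join o x m \/ w = join o y m) m).
  { split.
    - intros w [-> | ->]; apply le_join_r.
    - intros u Hu.
      assert (Hux : u ≤ join o x m) by (apply Hu; auto).
      assert (Huy : u ≤ join o y m) by (apply Hu; auto).
      assert (Huxy : meet o u x ≤ join o y m) by exact (le_trans (meet_le_l u x) Huy).
      unfold le in Hux, Huxy.
      rewrite <- Hux, Hdist; apply join_le; [|apply meet_le_r].
      rewrite <- Huxy, Hdist; apply join_le; [|apply meet_le_r].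
      apply (le_trans (y := meet o x y)); [|exact Hxy].
      apply le_meet; [apply (le_trans (meet_le_l _ _)) |]; apply meet_le_r. }
  destruct (Hm _ Hglb) as [E | E]; [left | right]; rewrite E; apply le_join_l.
Qed.

(* j is the join of the meets j /\ s (s in S): every completely meet-irreducible
   m above that join is meet-prime, so it lies above j or above some s. *)
Lemma Jinf_join_prime {j} : Jinf o j -> join_prime j.
Proof.
  intros Hj S H.
  destruct (Hlub (fun w => exists s, S s /\ w = meet o j s)) as [t [Ht Htleast]].
  assert (Hjt : j ≤ t).
  { apply (proj2 (Hmperf t)); intros m [Hm Htm].
    apply NNPP; intro Hjm; apply Hjm, H; intros s Hs.
    assert (Hjs : meet o j s ≤ m).
    { apply (le_trans (y := t)); [apply Ht; now exists s | exact Htm]. }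
    destruct (Minf_meet_prime Hm Hjs); [contradiction | assumption]. }
  assert (Hlub_j : is_lub o (fun w => exists s, S s /\ w = meet o j s) j).
  { split.
    - intros w [s [_ ->]]; apply meet_le_l.
    - intros u Hu; exact (le_trans Hjt (Htleast u Hu)). }
  destruct (Hj _ Hlub_j) as [s [Hs E]]; exists s; split; [exact Hs|].
  unfold le; now rewrite <- E.
Qed.

Lemma kappa_lub j : is_lub o (fun a => ~ j ≤ a) (kappa o j).
Proof. unfold kappa; apply epsilon_spec, Hlub. Qed.

Lemma not_le_kappa {j} : Jinf o j -> ~ j ≤ kappa o j.
Proof.
  intros Hj H.
  destruct (Jinf_join_prime Hj (fun a => ~ j ≤ a)) as [s [Hs Hjs]]; [|contradiction].
  intros u Hu; exact (le_trans H (proj2 (kappa_lub j) u Hu)).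
Qed.

Lemma le_kappa {j x} : Jinf o j -> (x ≤ kappa o j <-> ~ j ≤ x).
Proof.
  intro Hj; split.
  - intros H Hjx; exact (not_le_kappa Hj (le_trans Hjx H)).
  - apply (proj1 (kappa_lub j)).
Qed.

Lemma kappa_unique {j k} : Jinf o j -> (forall x, x ≤ k <-> ~ j ≤ x) -> kappa o j = k.
Proof. intros Hj H; apply le_ext; intro z; rewrite (le_kappa Hj), H; reflexivity. Qed.

Lemma kappa_monotone {x y} : Jinf o x -> Jinf o y -> y ≤ x -> kappa o y ≤ kappa o x.
Proof.
  intros Hx Hy Hyx; apply (le_kappa Hx); intro H.
  exact (not_le_kappa Hy (le_trans Hyx H)).
Qed.

Lemma dual_iso_Jinf_kappa {f g j} : dual_iso f g -> Jinf o j -> Jinf o (f (kappa o j)).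
Proof.
  intros Hfg Hj; apply join_prime_Jinf; intros S Hub.
  apply NNPP; intro Hno; apply (not_le_kappa Hj).
  assert (Hfj : forall s, S s -> s ≤ f j).
  { intros s Hs; apply (dual_iso_le_r Hfg), NNPP; intro Hjs.
    apply Hno; exists s; split; [exact Hs|].
    now apply (dual_iso_le_l Hfg), le_kappa. }
  rewrite <- (dual_iso_gf _ _ Hfg (kappa o j)); apply (dual_iso_le_r Hfg), Hub, Hfj.
Qed.

Lemma kappa_dual_iso {f g j} : dual_iso f g -> Jinf o j -> kappa o (f (kappa o j)) = f j.
Proof.
  intros Hfg Hj; apply kappa_unique; [exact (dual_iso_Jinf_kappa Hfg Hj)|].
  intro x; rewrite (dual_iso_le_r Hfg), (dual_iso_le_l Hfg), (le_kappa Hj).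
  split; [tauto | apply NNPP].
Qed.

Section Residuated.
Hypotheses (Hassoc : forall x y z, x ⋅ (y ⋅ z) = x ⋅ y ⋅ z)
  (Hmul1l : forall x, one o ⋅ x = x) (Hmul1r : forall x, x ⋅ one o = x)
  (Hres : forall a b c, (a ⋅ b ≤ c <-> a ≤ mn o (b ⋅ tl o c)) /\
                        (a ⋅ b ≤ c <-> b ≤ tl o (mn o c ⋅ a))).

Lemma residual_l a b c : a ⋅ b ≤ c <-> a ≤ mn o (b ⋅ tl o c).
Proof. apply Hres. Qed.

Lemma residual_r a b c : a ⋅ b ≤ c <-> b ≤ tl o (mn o c ⋅ a).
Proof. apply Hres. Qed.

Lemma mn_tl c : mn o (tl o c) = c.
Proof.
  apply le_ext; intro z; generalize (residual_l z (one o) c).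
  rewrite Hmul1r, Hmul1l; intro H; now symmetry.
Qed.

Lemma tl_mn c : tl o (mn o c) = c.
Proof.
  apply le_ext; intro z; generalize (residual_r (one o) z c).
  rewrite Hmul1r, Hmul1l; intro H; now symmetry.
Qed.

Lemma mul_mono_l {a a'} b : a ≤ a' -> a ⋅ b ≤ a' ⋅ b.
Proof. intro H; apply residual_l, (le_trans H), residual_l, le_refl. Qed.

Lemma mul_mono_r a {b b'} : b ≤ b' -> a ⋅ b ≤ a ⋅ b'.
Proof. intro H; apply residual_r, (le_trans H), residual_r, le_refl. Qed.

Lemma dual_iso_tl_mn : dual_iso (tl o) (mn o).
Proof.
  constructor; [exact mn_tl | exact tl_mn | |]; intros x y H.
  - assert (E : forall w, tl o w = tl o (mn o (tl o (one o)) ⋅ w)) by (intro; now rewrite mn_tl, Hmul1l).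
    rewrite (E x); apply residual_r, (le_trans (mul_mono_l _ H)), residual_r.
    rewrite <- E; apply le_refl.
  - assert (E : forall w, mn o w = mn o (w ⋅ tl o (mn o (one o)))) by (intro; now rewrite tl_mn, Hmul1r).
    rewrite (E x); apply residual_l, (le_trans (mul_mono_r _ H)), residual_l.
    rewrite <- E; apply le_refl.
Qed.

Lemma tl_one : tl o (one o) = mn o (one o).
Proof.
  apply le_ext; intro z; rewrite (dual_iso_le_r dual_iso_tl_mn).
  generalize (residual_l (one o) z (mn o (one o))); rewrite tl_mn, Hmul1r, Hmul1l.
  intro H; now symmetry.
Qed.

Lemma mul_le_tl_one x w : x ⋅ w ≤ tl o (one o) <-> w ≤ tl o x.
Proof. now rewrite residual_r, mn_tl, Hmul1l. Qed.

Lemma mul_le_mn_one a b : a ⋅ b ≤ mn o (one o) <-> a ≤ mn o b.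
Proof. now rewrite residual_l, tl_mn, Hmul1r. Qed.

(* Cyclicity of the constant 0 = ~1 = -1, up to the double negation ~~. *)
Lemma mul_le_tl_one_rotate x a : x ⋅ a ≤ tl o (one o) <-> a ⋅ tl o (tl o x) ≤ tl o (one o).
Proof. now rewrite mul_le_tl_one, tl_one, mul_le_mn_one, mn_tl. Qed.

Lemma tl_mul x y : tl o (x ⋅ y) = plus o (tl o y) (tl o x).
Proof.
  apply le_ext; intro z; unfold plus.
  rewrite <- mul_le_tl_one, <- Hassoc, mul_le_tl_one_rotate, <- Hassoc.
  rewrite mul_le_tl_one_rotate, <- Hassoc, tl_one, mul_le_mn_one.
  reflexivity.
Qed.

Lemma le_mn_mul z x y : z ≤ mn o (x ⋅ y) <-> y ≤ tl o (z ⋅ x).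
Proof.
  rewrite <- (tl_mn y) at 1; rewrite <- residual_l.
  symmetry; apply (dual_iso_le_r dual_iso_tl_mn).
Qed.

Lemma join_prime_le_mul_l {S b} x {w} :
  join_prime w -> is_lub o S b -> w ≤ b ⋅ x -> exists u, S u /\ w ≤ u ⋅ x.
Proof.
  intros Hw [_ Hb] Hwb.
  destruct (Hw (fun s => exists u, S u /\ s = u ⋅ x)) as [s [[u [Hu ->]] Hws]].
  - intros t Ht; apply (le_trans Hwb), residual_l, Hb; intros u Hu.
    apply residual_l, Ht; now exists u.
  - now exists u.
Qed.

Lemma join_prime_le_mul_r {S b} x {w} :
  join_prime w -> is_lub o S b -> w ≤ x ⋅ b -> exists u, S u /\ w ≤ x ⋅ u.
Proof.
  intros Hw [_ Hb] Hwb.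
  destruct (Hw (fun s => exists u, S u /\ s = x ⋅ u)) as [s [[u [Hu ->]] Hws]].
  - intros t Ht; apply (le_trans Hwb), residual_r, Hb; intros u Hu.
    apply residual_r, Ht; now exists u.
  - now exists u.
Qed.

Lemma Jinf_Jplus_tl {a} : Jinf o a -> Jinf o (Jplus_tl o a).
Proof. apply (dual_iso_Jinf_kappa dual_iso_tl_mn). Qed.

Lemma Jinf_Jplus_mn {a} : Jinf o a -> Jinf o (Jplus_mn o a).
Proof. apply (dual_iso_Jinf_kappa (dual_iso_sym dual_iso_tl_mn)). Qed.

Lemma Jplus_mn_tl {a} : Jinf o a -> Jplus_mn o (Jplus_tl o a) = a.
Proof. intro Ha; unfold Jplus_mn, Jplus_tl; now rewrite (kappa_dual_iso dual_iso_tl_mn Ha), mn_tl. Qed.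

Lemma Jplus_tl_mn {a} : Jinf o a -> Jplus_tl o (Jplus_mn o a) = a.
Proof.
  intro Ha; unfold Jplus_mn, Jplus_tl.
  now rewrite (kappa_dual_iso (dual_iso_sym dual_iso_tl_mn) Ha), tl_mn.
Qed.

Lemma Jplus_prec_circ_l x y :
  Jinf o y -> (Jplus_prec o x y <-> exists i, Jplus_I o i /\ Jplus_circ o i x y).
Proof.
  unfold Jplus_prec, Jplus_I, Jplus_circ; intro Hy; split.
  - intro Hyx.
    destruct (join_prime_le_mul_l x (Jinf_join_prime Hy) (Hjperf (one o))) as [i [Hi Hyi]].
    + now rewrite Hmul1l.
    + now exists i.
  - intros [i [[_ Hi1] [_ Hyi]]]; apply (le_trans Hyi).
    rewrite <- (Hmul1l x) at 2; now apply mul_mono_l.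
Qed.

Lemma Jplus_prec_circ_r x y :
  Jinf o y -> (Jplus_prec o x y <-> exists i, Jplus_I o i /\ Jplus_circ o x i y).
Proof.
  unfold Jplus_prec, Jplus_I, Jplus_circ; intro Hy; split.
  - intro Hyx.
    destruct (join_prime_le_mul_r x (Jinf_join_prime Hy) (Hjperf (one o))) as [i [Hi Hyi]].
    + now rewrite Hmul1r.
    + now exists i.
  - intros [i [[_ Hi1] [_ Hyi]]]; apply (le_trans Hyi).
    rewrite <- (Hmul1r x) at 2; now apply mul_mono_r.
Qed.

Lemma Jplus_circ_assoc x y z w :
  (exists u, Jplus_circ o x y u /\ Jplus_circ o u z w) <->
  (exists u, Jplus_circ o y z u /\ Jplus_circ o x u w).
Proof.
  unfold Jplus_circ; split.
  - intros [u [[_ Hu] [Hw Hwu]]].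
    destruct (join_prime_le_mul_r x (Jinf_join_prime Hw) (Hjperf (y ⋅ z))) as [v [Hv Hwv]].
    + rewrite Hassoc; exact (le_trans Hwu (mul_mono_l _ Hu)).
    + now exists v.
  - intros [u [[_ Hu] [Hw Hwu]]].
    destruct (join_prime_le_mul_l z (Jinf_join_prime Hw) (Hjperf (x ⋅ y))) as [v [Hv Hwv]].
    + rewrite <- Hassoc; exact (le_trans Hwu (mul_mono_r _ Hu)).
    + now exists v.
Qed.

Lemma Jplus_circ_tl_mn x {y z} : Jinf o y -> Jinf o z ->
  (Jplus_circ o x y (Jplus_tl o z) <-> Jplus_circ o z x (Jplus_mn o y)).
Proof.
  intros Hy Hz.
  generalize (Jinf_Jplus_tl Hz) (Jinf_Jplus_mn Hy).
  unfold Jplus_circ, Jplus_tl, Jplus_mn; intros Htz Hmy.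
  rewrite (dual_iso_le_l dual_iso_tl_mn), (le_kappa Hz).
  rewrite (dual_iso_le_l (dual_iso_sym dual_iso_tl_mn)), (le_kappa Hy).
  rewrite le_mn_mul; tauto.
Qed.

Lemma Jplus_DInFL_frame :
  DInFL_frame (Jinf o) (Jplus_I o) (Jplus_prec o) (Jplus_circ o) (Jplus_tl o) (Jplus_mn o).
Proof.
  unfold DInFL_frame; repeat apply conj.
  - intros i [Hi _]; exact Hi.
  - intros x y z _ _ [Hz _]; exact Hz.
  - intros x Hx; split; [apply Jinf_Jplus_tl | apply Jinf_Jplus_mn]; exact Hx.
  - intros x _; apply le_refl.
  - intros x y _ _ Hxy Hyx; now apply le_antisym.
  - intros x y z _ _ _ Hxy Hyz; exact (le_trans Hyz Hxy).
  - intros x y _ Hy; split; [apply Jplus_prec_circ_l | apply Jplus_prec_circ_r]; exact Hy.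
  - intros x y _ Hy Hxy [_ Hx1]; split; [exact Hy | exact (le_trans Hxy Hx1)].
  - intros u v x y _ _ _ Hy Hxy [_ Hx]; split; [exact Hy | exact (le_trans Hxy Hx)].
  - intros x y z _ _ _ w; apply Jplus_circ_assoc.
  - intros x y z _ Hy Hz; now apply Jplus_circ_tl_mn.
  - intros x Hx; rewrite (Jplus_mn_tl Hx), (Jplus_tl_mn Hx); split; apply le_refl.
Qed.

Section Negation.
Hypotheses (Hng_ng : forall a, ng o (ng o a) = a)
  (Hng_meet : forall a b, ng o (meet o a b) = join o (ng o a) (ng o b))
  (Hng_mul : forall a b, ng o (a ⋅ b) = plus o (ng o a) (ng o b)).

Lemma dual_iso_ng : dual_iso (ng o) (ng o).
Proof.
  assert (Hanti : forall x y, x ≤ y -> ng o y ≤ ng o x).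
  { intros x y H; unfold le in H; rewrite <- H, Hng_meet; apply le_join_r. }
  now constructor.
Qed.

Lemma ng_mul_ng a b : ng o (ng o a ⋅ ng o b) = plus o a b.
Proof. now rewrite Hng_mul, !Hng_ng. Qed.

Lemma Jinf_Jplus_ng a : Jinf o a -> Jinf o (Jplus_ng o a).
Proof. apply (dual_iso_Jinf_kappa dual_iso_ng). Qed.

Lemma Jplus_ng_ng a : Jinf o a -> Jplus_ng o (Jplus_ng o a) = a.
Proof. intro Ha; unfold Jplus_ng; now rewrite (kappa_dual_iso dual_iso_ng Ha), Hng_ng. Qed.

Lemma Jplus_ng_antitone x y : Jinf o x -> Jinf o y ->
  Jplus_prec o x y -> Jplus_prec o (Jplus_ng o y) (Jplus_ng o x).
Proof. intros Hx Hy Hyx; apply (dual_iso_anti_f _ _ dual_iso_ng), kappa_monotone; assumption. Qed.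

Lemma Jplus_circ_mn_ng x y z : Jinf o x -> Jinf o y -> Jinf o z ->
  (Jplus_circ o x y (Jplus_mn o z) <->
   Jplus_circ o (Jplus_ng o (Jplus_tl o y)) (Jplus_ng o (Jplus_tl o x)) (Jplus_ng o z)).
Proof.
  intros Hx Hy Hz.
  generalize (Jinf_Jplus_mn Hz) (Jinf_Jplus_ng _ Hz).
  unfold Jplus_circ, Jplus_ng, Jplus_tl, Jplus_mn; intros Hmz Hnz.
  rewrite (kappa_dual_iso dual_iso_tl_mn Hx), (kappa_dual_iso dual_iso_tl_mn Hy).
  rewrite (dual_iso_le_l (dual_iso_sym dual_iso_tl_mn)), (dual_iso_le_l dual_iso_ng).
  rewrite ng_mul_ng, tl_mul; tauto.
Qed.

Lemma Jplus_DqRA_frame :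
  DqRA_frame (Jinf o) (Jplus_I o) (Jplus_prec o) (Jplus_circ o)
             (Jplus_tl o) (Jplus_mn o) (Jplus_ng o).
Proof.
  split; [exact Jplus_DInFL_frame|].
  split; [exact Jinf_Jplus_ng|].
  split; [exact Jplus_ng_ng|].
  split; [exact Jplus_ng_antitone | exact Jplus_circ_mn_ng].
Qed.

End Negation.
End Residuated.
End Perfect.
End Algebra.

Theorem mainTheorem10 (A : Type) (o : qra_ops A) :
  complete_perfect_DqRA o ->
  (forall a, Jinf o a -> Jinf o (Jplus_ng o a)) /\
  DqRA_frame (Jinf o) (Jplus_I o) (Jplus_prec o) (Jplus_circ o)
             (Jplus_tl o) (Jplus_mn o) (Jplus_ng o).
Proof.
  intros [[[[HL [[Hassoc [Hmul1l Hmul1r]] Hres]] [Hng_ng [Hng_meet Hng_mul]]] Hdist]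
          [[Hlub _] [Hjperf Hmperf]]].
  split; [apply Jinf_Jplus_ng | apply Jplus_DqRA_frame]; assumption.
Qed.
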